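(* Let $K$ be a field and let $f(X)\in XK[X^2]$ be a monic polynomial. If $f(X)=g(X)\circ h(X)$ with $g,h\in K[X]$, where the characteristic of $K$ does not divide $\deg(g)$, then there exists a degree-one $\rho(X)\in K[X]$ such that both $g(\rho(X))$ and $\rho^{-1}(h(X))$ are monic polynomials in $XK[X^2]$.
   Context: $XK[X^2]$ denotes the set of polynomials all of whose terms have odd degree. For a degree-one $\rho(X)=aX+b\in K[X]$, $\rho^{-1}(X):=(X-b)/a$ is its compositional inverse. If $\mathrm{char}(K)=0$ the divisibility hypothesis holds automatically. *)

From HB Require Import structures.
From mathcomp Require Import all_boot all_order all_algebra.
Set Implicit Arguments. Unset Strict Implicit. Unset Printing Implicit Defensive.
Import GRing.Theory.
Local Open Scope ring_scope.

(* p \in X K[X^2]: every term of p has odd degree, i.e. all coefficients of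
   even degree vanish. *)
Definition odd_termsP (K : fieldType) (p : {poly K}) : Prop :=
  forall i : nat, ~~ odd i -> p`_i = 0.

Definition comp_inv (K : fieldType) (rho : {poly K}) : {poly K} :=
  (rho`_1)^-1 *: ('X - (rho`_0)%:P).

From HB Require Import structures.
From mathcomp Require Import all_boot all_order all_algebra.
From mathcomp Require Import zify.
Import GRing.Theory.
Set Implicit Arguments.
Unset Strict Implicit.
Unset Printing Implicit Defensive.
Local Open Scope ring_scope.

(* After an affine change of variables g and h are monic with h(0) = 0, and
   deg g = n, deg h = m are odd since n m = deg f is.  Split h = v + u into
   its odd and even parts.  If u <> 0 has degree k, then 0 < k < m, and the
   coefficient of X^(m(n-1)+k) in g(h) is that of v^n, which is 0, plus n lc(u):
   it comes from h^n - v^n = u (h^(n-1) + ... + v^(n-1)), the rest of g(h)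
   having degree at most m(n-1).  As m(n-1)+k is even and n is invertible in
   K, this contradicts f being odd; so h is odd.  Then h^2 is even, and the
   even part E(h^2) of f = E(h^2) + O(h^2) h must vanish, whence E = 0. *)

Section TopCoefficients.
Variable R : idomainType.
Implicit Types p q u v : {poly R}.

Lemma coefM_top p q k d :
  (size p <= k.+1)%N -> (size q <= d.+1)%N -> (p * q)`_(k + d) = p`_k * q`_d.
Proof.
move=> sp sq; have kS : (k < (k + d).+1)%N by rewrite ltnS leq_addr.
rewrite coefM (bigD1 (Ordinal kS)) //= addKn.
rewrite big1 ?addr0 // => j; rewrite -val_eqE /= => /negbTE jk.
have [ltjk|ltkj|eqjk] := ltngtP j k.
- by rewrite [q`__]nth_default ?mulr0 // (leq_trans sq) // ltn_subRL ltn_add2r.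
- by rewrite nth_default ?mul0r // (leq_trans sp).
- by move: jk; rewrite eqjk eqxx.
Qed.

Lemma size_monic_exp p n : p \is monic -> size (p ^+ n) = ((size p).-1 * n).+1.
Proof.
move=> mp; rewrite -size_exp prednK // lt0n size_poly_eq0.
by rewrite monic_neq0 ?monic_exp.
Qed.

Lemma coef_subrXX_monic v u m n :
  v \is monic -> size v = m.+1 -> (size u <= m)%N ->
  ((v + u) ^+ n - v ^+ n)`_(m * n.-1 + (size u).-1) = lead_coef u *+ n.
Proof.
move=> mv sv su.
have mh : v + u \is monic by rewrite monicE lead_coefDl ?sv.
have sh : size (v + u) = m.+1 by rewrite size_polyDl sv.
set d := (m * n.-1)%N; set T := fun i : 'I_n => (v + u) ^+ (n.-1 - i) * v ^+ i.
have mT i : T i \is monic by rewrite monicMl ?monic_exp.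
have sT i : size (T i) = d.+1.
  rewrite size_monicM ?monic_exp ?monic_neq0 ?monic_exp //.
  rewrite !size_monic_exp // sh sv /=.
  by rewrite addnS -mulnDr subnK //; have := ltn_ord i; lia.
have sS : (size (\sum_i T i)%R <= d.+1)%N.
  rewrite (leq_trans (size_sum _ _ _)) //.
  by apply/bigmax_leqP => i _; rewrite sT.
have cS : (\sum_i T i)`_d = n%:R.
  rewrite coef_sum (eq_bigr (fun _ => 1)) ?sumr_const ?card_ord // => i _.
  by move/monicP: (mT i); rewrite lead_coefE sT.
rewrite subrXX (_ : v + u - v = u); last by rewrite addrC addKr.
rewrite addnC coefM_top ?leqSpred // cS.
by rewrite -lead_coefE mulr_natr.
Qed.

Lemma coef_comp_monic_add g v u n m :
  g \is monic -> size g = n.+1 -> v \is monic -> size v = m.+1 ->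
  (0 < (size u).-1)%N -> (size u <= m)%N ->
  (g \Po (v + u))`_(m * n.-1 + (size u).-1) =
    (v ^+ n)`_(m * n.-1 + (size u).-1) + lead_coef u *+ n.
Proof.
move=> mg sg mv sv k_gt0 su.
set r := g - 'X^n.
have sr : (size r <= n)%N.
  apply/leq_sizeP => j; rewrite leq_eqVlt coefB coefXn => /predU1P[<-|ltnj].
    by move/monicP: mg; rewrite lead_coefE sg => ->; rewrite eqxx subrr.
  by rewrite gtn_eqF // subr0 nth_default // sg.
have size_rest : (size (r \Po (v + u)) <= m * n.-1 + (size u).-1)%N.
  rewrite (leq_trans (size_comp_poly_leq _ _)) // size_polyDl sv //= mulnC.
  by rewrite -addn1 leq_add // leq_mul2l -!subn1 (leq_sub2r 1 sr) orbT.
rewrite -(subrK 'X^n g) -/r comp_polyD comp_Xn_poly coefD nth_default // add0r.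
by rewrite -(subrK (v ^+ n) ((v + u) ^+ n)) coefD coef_subrXX_monic // addrC.
Qed.
End TopCoefficients.

Section OddTerms.
Variable K : fieldType.
Implicit Types g h p q r : {poly K}.

Lemma coef_even_part p i :
  (even_poly p \Po 'X^2)`_i = if odd i then 0 else p`_i.
Proof.
rewrite coef_comp_poly_Xn // dvdn2; case i_odd: (odd i) => //=.
by rewrite coef_even_poly divn2 halfK i_odd subn0.
Qed.

Lemma coef_odd_part p i :
  ((odd_poly p \Po 'X^2) * 'X)`_i = if odd i then p`_i else 0.
Proof.
rewrite coefMX; case: i => [|i] //=; rewrite coef_comp_poly_Xn // dvdn2.
case i_odd: (odd i) => //=.
by rewrite coef_odd_poly divn2 halfK i_odd subn0.
Qed.

Lemma odd_termsP_odd_part q : odd_termsP ((q \Po 'X^2) * 'X).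
Proof.
move=> i i_even; rewrite coefMX; case: i i_even => [|i] //= /negbNE i_odd.
by rewrite coef_comp_poly_Xn // dvdn2 i_odd.
Qed.

Lemma odd_termsPE p : odd_termsP p -> p = (odd_poly p \Po 'X^2) * 'X.
Proof.
move=> pO; apply/polyP => i; rewrite coef_odd_part.
by case: ifP => // /negbT; apply: pO.
Qed.

Lemma odd_termsP_odd_size p : p != 0 -> odd_termsP p -> odd (size p).-1.
Proof.
move=> p_neq0 pO; apply/negPn/negP => /pO.
by apply/eqP; rewrite -lead_coefE lead_coef_eq0.
Qed.

Lemma odd_termsP_exp p n : odd n -> odd_termsP p -> odd_termsP (p ^+ n).
Proof.
move=> n_odd /odd_termsPE ->; set w := odd_poly p.
have -> : ((w \Po 'X^2) * 'X) ^+ n = ((w ^+ n * 'X^(n./2)) \Po 'X^2) * 'X.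
  rewrite comp_polyM rmorphXn /= comp_Xn_poly -exprM -mulrA -exprSr mul2n.
  by rewrite exprMn -[in 'X^n](odd_double_half n) n_odd.
exact: odd_termsP_odd_part.
Qed.

Lemma odd_termsP_even_odd_eq0 q r :
  odd_termsP (q \Po 'X^2 + (r \Po 'X^2) * 'X) -> q = 0.
Proof.
move=> qrO; apply/polyP => i; have := qrO i.*2 (negbT (odd_double i)).
rewrite coefD (odd_termsP_odd_part r) ?odd_double // addr0 coef0.
by rewrite coef_comp_poly_Xn // dvdn2 odd_double /= -muln2 mulnK.
Qed.

Lemma odd_termsP_comp_left g h :
  (1 < size h)%N -> odd_termsP h -> odd_termsP (g \Po h) -> odd_termsP g.
Proof.
move=> h_gt1 /odd_termsPE hE; set w := odd_poly h in hE.
have w_neq0 : w != 0.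
  by apply: contraTneq h_gt1 => w0; rewrite hE w0 comp_poly0 mul0r size_poly0.
set s := w ^+ 2 * 'X.
have s_gt1 : (1 < size s)%N.
  by rewrite size_mulX ?expf_neq0 // ltnS lt0n size_poly_eq0 expf_neq0.
have h2E : h ^+ 2 = s \Po 'X^2.
  by rewrite comp_polyM rmorphXn /= comp_polyX {1}hE exprMn.
(* g(h) = E(s)(X^2) + (O(s) w)(X^2) X, with E, O the even/odd parts of g. *)
rewrite -[g in g \Po _]poly_even_odd comp_polyD comp_polyM comp_polyX.
rewrite -!comp_polyA !comp_Xn_poly h2E !comp_polyA hE mulrA -comp_polyM.
move=> /odd_termsP_even_odd_eq0 /eqP; rewrite comp_poly_eq0 // => /eqP g_even0.
rewrite -[g]poly_even_odd g_even0 comp_poly0 add0r.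
exact: odd_termsP_odd_part.
Qed.

Lemma odd_termsP_comp_right g h :
  g \is monic -> h \is monic -> odd (size g).-1 -> odd (size h).-1 ->
  h`_0 = 0 ->
  ((size g).-1)%:R != 0 :> K -> odd_termsP (g \Po h) -> odd_termsP h.
Proof.
move=> mg mh n_odd m_odd h0 n_neq0 ghO.
set n := (size g).-1 in n_odd n_neq0; set m := (size h).-1 in m_odd.
have sg : size g = n.+1 by rewrite prednK // lt0n size_poly_eq0 monic_neq0.
have sh : size h = m.+1 by rewrite prednK // lt0n size_poly_eq0 monic_neq0.
set u := even_poly h \Po 'X^2; set v := (odd_poly h \Po 'X^2) * 'X.
have hE : h = v + u by rewrite addrC poly_even_odd.
have [u0|u_neq0] := eqVneq u 0.
  by rewrite hE u0 addr0; apply: odd_termsP_odd_part.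
have su : (size u <= m)%N.
  apply/leq_sizeP => j; rewrite coef_even_part leq_eqVlt => /predU1P[<-|ltmj].
    by rewrite m_odd.
  by rewrite nth_default ?if_same // sh.
have k_gt0 : (0 < (size u).-1)%N.
  rewrite lt0n; apply: contra_neq u_neq0 => k0.
  rewrite [u]size1_polyC ?coef_even_part ?h0 //.
  by move: k0; case: size => [|[]].
have k_even : ~~ odd (size u).-1.
  move: u_neq0; rewrite -lead_coef_eq0 lead_coefE coef_even_part.
  by case: odd; rewrite ?eqxx.
have vE : v = h - u by rewrite hE addrK.
have sv : size v = m.+1 by rewrite vE size_polyDl ?size_polyN sh // ltnS.
have mv : v \is monic by rewrite vE monicE lead_coefDl ?size_polyN ?sh ?ltnS.
have vnO : odd_termsP (v ^+ n) by apply/odd_termsP_exp/odd_termsP_odd_part.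
have D_even : ~~ odd (m * n.-1 + (size u).-1).
  rewrite oddD oddM (negbTE k_even) addbF.
  by move: n_odd; case: (n) => //= ? /negbTE->; rewrite andbF.
move: (ghO _ D_even); rewrite hE coef_comp_monic_add // vnO // add0r => /eqP.
by rewrite -mulr_natr mulf_eq0 lead_coef_eq0 (negbTE u_neq0) (negbTE n_neq0).
Qed.
End OddTerms.

Lemma natf_neq0_ndvd_pchar (K : fieldType) n :
  (0 < n)%N -> (forall p, p \in [pchar K] -> ~~ (p %| n)%N) -> n%:R != 0 :> K.
Proof.
move=> n_gt0 ndvd; apply/negP => n0; have [p pK] := natf0_pchar n_gt0 n0.
by move: (ndvd p pK); rewrite (dvdn_pcharf pK) n0.
Qed.

Section AffineNormalization.
Variable K : fieldType.
Implicit Types g h rho : {poly K}.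

Lemma comp_poly_comp_inv rho : size rho = 2 -> rho \Po comp_inv rho = 'X.
Proof.
move=> srho; have rho1 : rho`_1 != 0.
  have -> : rho`_1 = lead_coef rho by rewrite lead_coefE srho.
  by rewrite lead_coef_eq0 -size_poly_eq0 srho.
have rhoE : rho = (rho`_1)%:P * 'X + (rho`_0)%:P.
  apply/polyP => -[|[|i]]; rewrite coefD coefMX !coefC /= ?add0r ?addr0 //.
  by rewrite nth_default ?srho.
rewrite [rho in rho \Po _]rhoE comp_polyD comp_polyM !comp_polyC comp_polyX.
by rewrite /comp_inv mul_polyC scalerA mulfV // scale1r subrK.
Qed.

Definition affine_normalizer h := (lead_coef h)%:P * 'X + (h`_0)%:P.

Lemma size_affine_normalizer h : h != 0 -> size (affine_normalizer h) = 2.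
Proof.
move=> h_neq0; rewrite size_MXaddC polyC_eq0 lead_coef_eq0 (negbTE h_neq0).
by rewrite size_polyC lead_coef_eq0 h_neq0.
Qed.

Lemma comp_inv_affine_normalizer h :
  (1 < size h)%N ->
  [/\ comp_inv (affine_normalizer h) \Po h \is monic,
      size (comp_inv (affine_normalizer h) \Po h) = size h &
      (comp_inv (affine_normalizer h) \Po h)`_0 = 0].
Proof.
move=> h_gt1; have lead_neq0 : lead_coef h != 0.
  by rewrite lead_coef_eq0 -size_poly_eq0 -lt0n ltnW.
have sC : (size (- (h`_0)%:P) < size h)%N.
  by rewrite size_polyN (leq_ltn_trans (size_polyC_leq1 _)).
rewrite /comp_inv /affine_normalizer !coefD !coefMX !coefC /= addr0 add0r.
rewrite comp_polyZ comp_polyB comp_polyX comp_polyC; split.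
- by rewrite monicE lead_coefZ lead_coefDl // mulVf.
- by rewrite size_scale ?invr_eq0 // size_polyDl.
- by rewrite coefZ coefB coefC subrr mulr0.
Qed.
End AffineNormalization.

Theorem lemma2p4 (K : fieldType) (f g h : {poly K}) :
  f \is monic -> odd_termsP f ->
  f = g \Po h ->
  (forall p : nat, p \in [pchar K] -> ~~ (p %| (size g).-1)%N) ->
  exists rho : {poly K},
    size rho = 2%N /\
    (g \Po rho) \is monic /\ odd_termsP (g \Po rho) /\
    (comp_inv rho \Po h) \is monic /\ odd_termsP (comp_inv rho \Po h).
Proof.
move=> mf fO fE char_g.
have := odd_termsP_odd_size (monic_neq0 mf) fO.
rewrite fE size_comp_poly oddM => /andP[n_odd m_odd].
have h_gt1 : (1 < size h)%N by move: m_odd; case: size => [|[]].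
set rho := affine_normalizer h.
set h' := comp_inv rho \Po h; set g' := g \Po rho.
have srho : size rho = 2.
  by rewrite size_affine_normalizer // -size_poly_eq0 -lt0n ltnW.
have [mh' sh' h'0] := comp_inv_affine_normalizer h_gt1.
have sg' : size g' = size g by rewrite size_comp_poly2.
have fE' : f = g' \Po h'.
  rewrite fE -comp_polyA [rho \Po _]comp_polyA.
  by rewrite comp_poly_comp_inv // comp_polyX.
have mg' : g' \is monic.
  move: mf; rewrite fE' !monicE lead_coef_comp ?sh' //.
  by rewrite (monicP mh') expr1n mulr1.
have n_neq0 : ((size g').-1)%:R != 0 :> K.
  by rewrite sg'; apply: natf_neq0_ndvd_pchar => //; move: n_odd; case: (_.-1).
rewrite -sg' in n_odd; rewrite -sh' in m_odd h_gt1; rewrite fE' in fO.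
have h'O := odd_termsP_comp_right mg' mh' n_odd m_odd h'0 n_neq0 fO.
have g'O := odd_termsP_comp_left h_gt1 h'O fO.
by exists rho.
Qed.
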